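(* Let $1\le t\le k$ be integers and let $U$ be a $t$-intersecting family of polynomials over $\mathbb{F}_q$ of degree at most $k$. Then distinct members of $U$ have distinct $(k-t+1)$-tuples of coefficients of the monomials $x^t,x^{t+1},\ldots,x^k$; i.e. the map sending a polynomial in $U$ to the tuple of its coefficients of $x^t,\ldots,x^k$ is injective on $U$.
   Context: A set $U$ of polynomials over $\mathbb{F}_q$ is $t$-intersecting if for any two $f_1,f_2\in U$ we have $|\{(x,f_1(x)):x\in\mathbb{F}_q\}\cap\{(x,f_2(x)):x\in\mathbb{F}_q\}|\ge t$. *)

From HB Require Import structures.
From mathcomp Require Import all_boot all_order all_algebra all_field.
Set Implicit Arguments. Unset Strict Implicit. Unset Printing Implicit Defensive.
Import GRing.Theory.
Local Open Scope ring_scope.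

(* A family U of polynomials over the finite field F (F plays the role of F_q)
   is t-intersecting if any two members f1, f2 of U have graphs
   {(x, f1(x)) : x in F} and {(x, f2(x)) : x in F} sharing at least t points,
   i.e. f1 and f2 agree at at least t points x of F. *)
Definition t_intersecting (F : finFieldType) (t : nat) (U : pred {poly F}) : Prop :=
  forall f1 f2 : {poly F}, U f1 -> U f2 ->
    (t <= #|[set x : F | f1.[x] == f2.[x]]|)%N.

From mathcomp Require Import all_boot all_order all_algebra all_field.
Set Implicit Arguments. Unset Strict Implicit. Unset Printing Implicit Defensive.
Import GRing.Theory.
Local Open Scope ring_scope.

(* Two members of U that agree on the coefficients of x^t, ..., x^k differ by
   a polynomial of degree < t; it has every agreement point of the two graphs
   as a root, of which there are at least t, so it must vanish. *)

Lemma size_subr_leq_of_coef_eq (R : nzRingType) (t k : nat) (p q : {poly R}) :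
  (size p <= k.+1)%N -> (size q <= k.+1)%N ->
  (forall i, (t <= i <= k)%N -> p`_i = q`_i) ->
  (size (p - q)%R <= t)%N.
Proof.
move=> /leq_sizeP p_small /leq_sizeP q_small eq_pq.
apply/leq_sizeP => i le_ti; rewrite coefB.
have [le_ik | lt_ki] := leqP i k; first by rewrite eq_pq ?le_ti ?subrr.
by rewrite p_small ?q_small ?subrr.
Qed.

Lemma card_agree_lt_size_subr (R : finIdomainType) (p q : {poly R}) :
  p != q -> (#|[set x | p.[x] == q.[x]]| < size (p - q)%R)%N.
Proof.
rewrite -subr_eq0 => nz_pq.
have roots_pq : all (root (p - q)) (enum [set x | p.[x] == q.[x]]).
  by apply/allP => x; rewrite mem_enum inE /root hornerD hornerN subr_eq0.
by rewrite cardE (max_poly_roots nz_pq roots_pq (enum_uniq _)).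
Qed.

Theorem lemma4 (F : finFieldType) (t k : nat) (U : pred {poly F}) :
  (1 <= t)%N -> (t <= k)%N ->
  (forall f, U f -> (size f <= k.+1)%N) ->
  t_intersecting t U ->
  forall f1 f2 : {poly F}, U f1 -> U f2 ->
    (forall i : nat, (t <= i <= k)%N -> f1`_i = f2`_i) ->
    f1 = f2.
Proof.
move=> _ _ size_U t_int f1 f2 U_f1 U_f2 eq_coefs.
apply/eqP; apply: contraT => neq_f12.
have size_f12 := size_subr_leq_of_coef_eq (size_U _ U_f1) (size_U _ U_f2) eq_coefs.
have := leq_trans (card_agree_lt_size_subr neq_f12) size_f12.
by rewrite ltnNge t_int.
Qed.
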